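(* For every collection $\mathcal D_1$ of pairwise disjoint dyadic strips in $\mathcal D$, $\mu(\bigcup_{D\in\mathcal D_1}D)=\sum_{D\in\mathcal D_1}\mu(D)=\sum_{D\in\mathcal D_1}|\pi(D)|$. For every collection $\mathcal T_1$ of pairwise disjoint dyadic trees in $\mathcal T$, $\nu(\bigcup_{T\in\mathcal T_1}T)=\sum_{T\in\mathcal T_1}\nu(T)=\sum_{T\in\mathcal T_1}|\pi(T)|$. Moreover, for every collection $\mathcal D_1$ of pairwise disjoint strips in $\mathcal D$ and every tree $T\in\mathcal T$, $\nu(T\cap\bigcup_{D\in\mathcal D_1}D)=\sum_{D\in\mathcal D_1}\nu(T\cap D)$.
   Context: $\pi$ is the projection onto the first coordinate and $|\cdot|$ Lebesgue measure. Dyadic intervals: $I(m,l)=(2^lm,2^l(m+1)]$. Tiles: $H(m,l,n)=I(m,l)\times(2^{l-1},2^l]\times I(n,-l)$. Strips $D(m,l)=I(m,l)\times(0,2^l]\times\mathbb R$ form $\mathcal D$, with $\sigma(D(m,l))=2^l$. Trees $T(m,l,n)=\bigcup_{l'\le l}\bigcup_{m':\,I(m',l')\subseteq I(m,l)}H(m',l',N(n,l'))$, with $N(n,l')$ the integer such that $I(n,-l)\subseteq I(N(n,l'),-l')$, form $\mathcal T$, with $\tau(T(m,l,n))=2^l$. On $X=\mathbb R\times(0,\infty)\times\mathbb R$, $\mu(A)=\inf\{\sum_{S\in\mathcal S'}\sigma(S):\mathcal S'\subseteq\mathcal D,\ A\subseteq\bigcup\mathcal S'\}$ and $\nu(A)=\inf\{\sum_{S\in\mathcal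 S'}\tau(S):\mathcal S'\subseteq\mathcal T,\ A\subseteq\bigcup\mathcal S'\}$. *)

From mathcomp Require Import all_boot all_order all_algebra.
From mathcomp Require Import all_classical all_reals all_analysis.
Import Order.TTheory GRing.Theory Num.Theory.
Local Open Scope classical_set_scope.
Local Open Scope ring_scope.

Section Dyadic.
Variable R : realType.

(* Points of X = R x (0,oo) x R are represented in R * R * R; all sets
   considered (strips, tiles, trees) lie inside X. *)
Definition pt := (R * R * R)%type.

Definition proj1 (p : pt) : R := p.1.1.

Definition dyI (m l : int) : set R :=
  [set x | (2%:R ^ l) * m%:~R < x /\ x <= (2%:R ^ l) * (m + 1)%:~R].

Definition tile (m l n : int) : set pt :=
  [set p | dyI m l p.1.1 /\
           (2%:R ^ (l - 1) < p.1.2 /\ p.1.2 <= 2%:R ^ l) /\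
           dyI n (- l) p.2].

Definition strip (m l : int) : set pt :=
  [set p | dyI m l p.1.1 /\ (0 < p.1.2 /\ p.1.2 <= 2%:R ^ l)].

Definition tree (m l n : int) : set pt :=
  [set p | exists l' m' N : int,
     [/\ (l' <= l)%R, dyI m' l' `<=` dyI m l, dyI n (- l) `<=` dyI N (- l')
       & tile m' l' N p]].

Definition strips : set (set pt) := [set strip ml.1 ml.2 | ml in setT].
Definition trees : set (set pt) := [set tree j.1.1 j.1.2 j.2 | j in setT].

Local Open Scope ereal_scope.

Definition mu (A : set pt) : \bar R :=
  ereal_inf [set s | exists J : set (int * int),
     A `<=` \bigcup_(j in J) strip j.1 j.2 /\
     s = (\esum_(j in J) ((2%:R ^ j.2 : R)%:E))%R].

Definition nu (A : set pt) : \bar R :=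
  ereal_inf [set s | exists J : set (int * int * int),
     A `<=` \bigcup_(j in J) tree j.1.1 j.1.2 j.2 /\
     s = (\esum_(j in J) ((2%:R ^ j.1.2 : R)%:E))%R].

Definition len_proj (A : set pt) : \bar R := lebesgue_measure (proj1 @` A).

Definition pairwise_disjoint (C : set (set pt)) : Prop :=
  forall A B, C A -> C B -> A <> B -> A `&` B = set0.

End Dyadic.

Arguments mu {R} A.
Arguments nu {R} A.
Arguments len_proj {R} A.
Arguments pairwise_disjoint {R} C.

(* Strips and trees generate the outer measures [mu] and [nu], and each of
   them has a top point: the right end of its base interval, at its maximal
   height.  A generator containing the top point of another one has a larger
   shadow (projection on the first axis, whose length is the weight), and two
   generators whose top points lie in a common generator and whose shadows meet
   do intersect.  Given a cover of a disjoint union of generators, charge each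
   generator to a member of the cover containing its top point: the generators
   charged to one member have disjoint shadows inside its shadow, so their total
   weight is at most its weight.  Hence the covering infimum is additive on
   disjoint unions of generators.  A tree meets a strip in the empty set or in a
   tree, which reduces the last claim to the same additivity. *)

From mathcomp Require Import all_boot all_order all_algebra.
From mathcomp Require Import all_classical all_reals all_analysis.
From mathcomp Require Import zify.

Set Implicit Arguments.
Unset Strict Implicit.
Import Order.TTheory GRing.Theory Num.Theory.
Local Open Scope classical_set_scope.
Local Open Scope ring_scope.

Lemma esum_content_le d (R : realType) (T : ringOfSetsType d)
    (m : {content set T -> \bar R}) (I : choiceType) (K : set I)
    (F : I -> set T) (A : set T) :
  measurable A -> (forall i, K i -> measurable (F i)) ->
  (forall i, K i -> F i `<=` A) -> trivIset K F ->
  (\esum_(i in K) m (F i) <= m A)%E.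
Proof.
move=> mA mF FA tF; apply: ge_ereal_sup => _ [X [finX XK] <-].
rewrite -measure_fin_bigcup//; last 2 first.
- exact: sub_trivIset tF.
- by move=> i /XK; exact: mF.
apply: le_measure; rewrite ?inE//; last by move=> x [i /XK Ki /FA]; apply.
by apply: fin_bigcup_measurable => // i /XK; exact: mF.
Qed.

Lemma esum_bigcup_trivIset (R : realType) (I T : choiceType) (K : set I)
    (F : I -> set T) (a : T -> \bar R) :
  trivIset K F -> (forall x, (0 <= a x)%E) ->
  \esum_(x in \bigcup_(i in K) F i) a x = \esum_(i in K) \esum_(x in F i) a x.
Proof.
move=> tF a0; rewrite esum_esum// -(esum_image _ snd).
  congr esum; apply/seteqP; split=> [x [i Ki Fix]|_ [[i x] [Ki Fix] <-]].
    by exists (i, x).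
  by exists i.
move=> [i x] [i' x'] /set_mem[Ki Fix] /set_mem[Ki' Fix'] /= xx'.
by rewrite xx' in Fix *; rewrite (tF i i')//; exists x'.
Qed.

Section cover_inf.
Context {R : realType} {T : Type} {L : choiceType}.
Variables (S : L -> set T) (w : L -> R).
Local Open Scope ereal_scope.

Definition cover_inf (A : set T) : \bar R :=
  ereal_inf [set s | exists J : set L,
     A `<=` \bigcup_(j in J) S j /\ s = (\esum_(j in J) (w j)%:E)%R].

Lemma cover_inf_le A J : A `<=` \bigcup_(j in J) S j ->
  cover_inf A <= \esum_(j in J) (w j)%:E.
Proof. by move=> AJ; apply: ereal_inf_lbound; exists J. Qed.

End cover_inf.

Record top_point_system {R : realType} {T : Type} {L : choiceType}
    (S : L -> set T) (w : L -> R) {d} {Y : ringOfSetsType d}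
    (m : {content set Y -> \bar R}) (X : L -> set Y) (top : L -> T) : Prop :=
  TopPointSystem {
  top_in : forall k, S k (top k);
  shadow_measurable : forall k, measurable (X k);
  shadow_content : forall k, m (X k) = (w k)%:E;
  shadow_sub : forall j k, S j (top k) -> X k `<=` X j;
  shadow_meet : forall j k k', S j (top k) -> S j (top k') ->
    X k `&` X k' !=set0 -> S k `&` S k' !=set0 }.

Section top_point_systems.
Context {R : realType} {T : Type} {L : choiceType}.
Context {S : L -> set T} {w : L -> R}.
Context {d} {Y : ringOfSetsType d} {m : {content set Y -> \bar R}}.
Context {X : L -> set Y} {top : L -> T}.
Hypothesis tps : top_point_system S w m X top.
Local Open Scope ereal_scope.
Local Notation cover_inf := (cover_inf S w).

Lemma weight_ge0 k : 0 <= (w k)%:E.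
Proof. by rewrite -(shadow_content tps) measure_ge0. Qed.

Lemma cover_inf_ge0 A : 0 <= cover_inf A.
Proof.
by apply/ereal_infP => _ [J [_ ->]]; apply: esum_ge0 => k _; exact: weight_ge0.
Qed.

Lemma cover_inf0 : cover_inf set0 = 0.
Proof.
apply/le_anti; rewrite cover_inf_ge0 andbT -(esum_set0 (fun j => (w j)%:E)).
exact: cover_inf_le.
Qed.

Lemma esum_weight_le_top j (K : set L) : trivIset K S ->
  (forall k, K k -> S j (top k)) -> \esum_(k in K) (w k)%:E <= (w j)%:E.
Proof.
move=> tS Ktop; rewrite -(shadow_content tps).
under eq_esum => k _ do rewrite -(shadow_content tps).
apply: esum_content_le => [|k _|k /Ktop /(shadow_sub tps)//|k k' Kk Kk' XX].
- exact: (shadow_measurable tps j).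
- exact: (shadow_measurable tps k).
- exact: tS k k' Kk Kk' (shadow_meet tps (Ktop k Kk) (Ktop k' Kk') XX).
Qed.

Lemma esum_weight_le_cover (K J : set L) : trivIset K S ->
  \bigcup_(k in K) S k `<=` \bigcup_(j in J) S j ->
  \esum_(k in K) (w k)%:E <= \esum_(j in J) (w j)%:E.
Proof.
move=> tS KJ.
have [jof jofP] :
    {jof : L -> L & forall k, K k -> J (jof k) /\ S (jof k) (top k)}.
  apply: (@choice _ _ (fun k j => K k -> J j /\ S j (top k))) => k.
  have [Kk|nKk] := pselect (K k); last by exists k.
  by have [j Jj Sj] := KJ _ (ex_intro2 _ _ k Kk (top_in tps k)); exists j.
pose fibre j := [set k | K k /\ jof k = j].
have -> : K = \bigcup_(j in J) fibre j.
  apply/seteqP; split=> [k Kk|k [j _ []//]].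
  by exists (jof k); [exact: (jofP k Kk).1|].
rewrite esum_bigcup_trivIset; last 2 first.
- by move=> i j _ _ [k [[_ <-] [_ <-]]].
- exact: weight_ge0.
apply: le_esum => j _; apply: esum_weight_le_top => [|k [Kk <-]].
  by apply: sub_trivIset tS => k [].
exact: (jofP k Kk).2.
Qed.

Lemma cover_inf_bigcup_generators (K : set L) : trivIset K S ->
  cover_inf (\bigcup_(k in K) S k) = \esum_(k in K) (w k)%:E.
Proof.
move=> tS; apply/le_anti; rewrite cover_inf_le//=.
by apply/ereal_infP => _ [J [KJ ->]]; exact: esum_weight_le_cover.
Qed.

Lemma cover_inf_generator k : cover_inf (S k) = (w k)%:E.
Proof.
rewrite -(bigcup_set1 S k) cover_inf_bigcup_generators ?esum_set1 ?weight_ge0//.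
by move=> i j -> ->.
Qed.

Lemma cover_inf_bigcup_range (U : choiceType) (I : set U) (g : U -> set T) :
  (forall i, I i -> range S (g i)) -> trivIset I g ->
  cover_inf (\bigcup_(i in I) g i) = \esum_(i in I) cover_inf (g i).
Proof.
move=> gS tg; have [->|/set0P[i0 /gS[k0 _ _]]] := eqVneq I set0.
  by rewrite bigcup_set0 esum_set0 cover_inf0.
have [kof kofP] : {kof : U -> L & forall i, I i -> g i = S (kof i)}.
  apply: (@choice _ _ (fun i k => I i -> g i = S k)) => i.
  have [/gS[k _ <-]|nIi] := pselect (I i); first by exists k.
  by exists k0.
have -> : \bigcup_(i in I) g i = \bigcup_(k in kof @` I) S k.
  by rewrite bigcup_image; exact: eq_bigcupr.
rewrite cover_inf_bigcup_generators ?esum_image.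
- by apply: eq_esum => i /kofP ->; rewrite cover_inf_generator.
- move=> i i' /set_mem Ii /set_mem Ii' kii'; apply: tg => //.
  by rewrite !kofP// kii' setIid; exists (top (kof i')); exact: (top_in tps).
- apply: trivIset_image => i i' Ii Ii' /=; rewrite -!kofP// => gg.
  by rewrite (tg i i' Ii Ii' gg).
Qed.

Lemma cover_inf_bigcup (U : choiceType) (I : set U) (g : U -> set T) :
  (forall i, I i -> g i = set0 \/ range S (g i)) -> trivIset I g ->
  cover_inf (\bigcup_(i in I) g i) = \esum_(i in I) cover_inf (g i).
Proof.
move=> gS tg; pose I' := I `&` [set i | range S (g i)].
have g0 i : I i -> ~ I' i -> g i = set0.
  by move=> Ii nI'i; case: (gS i Ii) => // Sgi; case: nI'i.
have -> : \bigcup_(i in I) g i = \bigcup_(i in I') g i.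
  apply/seteqP; split=> [x [i Ii gix]|x [i [Ii _] gix]]; last by exists i.
  have [I'i|nI'i] := pselect (I' i); first by exists i.
  by move: gix; rewrite g0.
have -> : \esum_(i in I) cover_inf (g i) = \esum_(i in I') cover_inf (g i).
  rewrite esum_mkcondr; apply: eq_esum => i Ii.
  case: ifPn => //; rewrite notin_setE => nI'i.
  by rewrite g0 ?cover_inf0 // => -[].
apply: cover_inf_bigcup_range => [i [] //|].
by apply: sub_trivIset tg => i [].
Qed.

End top_point_systems.

Section dyadic.
Variable R : realType.
Implicit Types (a b m n k l : int) (x : R).

Let two_gt1 : 1 < 2%:R :> R. Proof. by rewrite ltr1n. Qed.

Lemma pow2_gt0 l : 0 < 2%:R ^ l :> R.
Proof. exact/exprz_gt0/(lt_trans ltr01). Qed.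

Lemma ler_pow2 l l' : (2%:R ^ l <= 2%:R ^ l' :> R) = (l <= l').
Proof. exact: ler_eXz2l. Qed.

Lemma ltr_pow2 l l' : (2%:R ^ l < 2%:R ^ l' :> R) = (l < l').
Proof. exact: ltr_eXz2l. Qed.

Lemma dyI_right a k : dyI R a k (2%:R ^ k * (a + 1)%:~R).
Proof. by split => //; rewrite ltr_pM2l ?pow2_gt0// ltr_int ltzD1. Qed.

Lemma dyI_exists x k : exists a, dyI R a k x.
Proof.
exists (Num.ceil (x / 2%:R ^ k) - 1); split.
  by rewrite -ltr_pdivlMl ?pow2_gt0// mulrC ceilB1_lt.
by rewrite -ler_pdivrMl ?pow2_gt0// mulrC subrK ceil_ge.
Qed.

(* Writing [k' = k + n], the interval [I(b, k')] is the union of the [2^n]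
   intervals [I(a, k)] with [2^n b <= a < 2^n (b + 1)]. *)
Lemma dyI_sub {a b k k' x} : k <= k' -> dyI R a k x -> dyI R b k' x ->
  dyI R a k `<=` dyI R b k'.
Proof.
move=> kk'; have [n ->] : exists n : nat, k' = k + n by exists `|k' - k|%N; lia.
rewrite /dyI /= expfzDr ?pnatr_eq0// -exprnP.
have -> : 2%:R ^+ n = (2 ^+ n : int)%:~R :> R by rewrite rmorphXn.
set c := 2%:R ^ k; have c0 : 0 < c := pow2_gt0 k.
set q : int := 2 ^+ n; rewrite -mulrA -[in X in _ -> X]mulrA -!intrM.
move=> [ax xa] [bx xb] y [ay ya].
have lt_a_qb1 : a < q * (b + 1).
  by rewrite -(ltr_int R) -(ltr_pM2l c0) (lt_le_trans ax).
have lt_qb_a1 : q * b < a + 1.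
  by rewrite -(ltr_int R) -(ltr_pM2l c0) (lt_le_trans bx).
split.
  by apply: le_lt_trans ay; rewrite ler_pM2l// ler_int; lia.
by apply: le_trans ya _; rewrite ler_pM2l// ler_int; lia.
Qed.

Lemma dyI_itv a k :
  dyI R a k = [set` `]2%:R ^ k * a%:~R, 2%:R ^ k * (a + 1)%:~R]].
Proof. by apply/seteqP; split => x /=; rewrite in_itv /= => /andP. Qed.

Lemma dyI_measurable a k : measurable (dyI R a k).
Proof. by rewrite dyI_itv; exact: measurable_itv. Qed.

Lemma lebesgue_measure_dyI a k : lebesgue_measure (dyI R a k) = (2%:R ^ k)%:E.
Proof.
rewrite dyI_itv lebesgue_measure_itv /= lte_fin ltr_pM2l ?pow2_gt0// ltr_int.
by rewrite ltzD1 lexx -EFinD intrD mulrDr addrAC subrr add0r mulr1.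
Qed.

Definition strip_top m l : pt R := ((2%:R ^ l * (m + 1)%:~R, 2%:R ^ l), 0).

Lemma strip_top_in m l : strip R m l (strip_top m l).
Proof. by split; [exact: dyI_right | split; [exact: pow2_gt0|]]. Qed.

Lemma in_strip_top m l m' l' : strip R m' l' (strip_top m l) ->
  dyI R m l `<=` dyI R m' l'.
Proof.
move=> [Im' [_ ll']].
by apply: (dyI_sub _ (dyI_right m l) Im'); rewrite -ler_pow2.
Qed.

Lemma strip_meet m l m' l' : dyI R m l `&` dyI R m' l' !=set0 ->
  strip R m l `&` strip R m' l' !=set0.
Proof.
wlog ll' : m l m' l' / l <= l'.
  move=> wlog meet; case: (lerP l l') => [|/ltW] ll'; first exact: wlog.
  by rewrite setIC; apply: wlog; rewrite // setIC.
move=> [x [Ix Ix']].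
exists (strip_top m l); split; first exact: strip_top_in.
split; first exact: dyI_sub ll' Ix Ix' _ (dyI_right m l).
by split; [exact: pow2_gt0 | rewrite ler_pow2].
Qed.

Lemma proj_strip m l : proj1 R @` strip R m l = dyI R m l.
Proof.
apply/seteqP; split=> [_ [p [Ip _] <-]//|x Ix].
by exists ((x, 2%:R ^ l), 0) => //; split => //; split; [exact: pow2_gt0|].
Qed.

Definition tree_top m l n : pt R :=
  ((2%:R ^ l * (m + 1)%:~R, 2%:R ^ l), 2%:R ^ (- l) * (n + 1)%:~R).

(* Tiles at scale [l] are exactly those with height in [(2^(l-1), 2^l]], so
   the height [2^l] of a top point fixes the scale of the tile containing it. *)
Lemma in_tree_top m l n m' l' n' : tree R m' l' n' (tree_top m l n) <->
  [/\ l <= l', dyI R m l `<=` dyI R m' l' & dyI R n' (- l') `<=` dyI R n (- l)].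
Proof.
split=> [[l'' [m'' [N [ll' Im In [Ix [[lh hl] Iz]]]]]]|[ll' Im In]]; last first.
  exists l, m, n; split=> //; split; first exact: dyI_right.
  by split; [rewrite ltr_pow2 ltrBlDr ltzD1 | exact: dyI_right].
have el : l'' = l by move: lh hl; rewrite /= ltr_pow2 ler_pow2; lia.
subst l''; split=> //.
  exact: subset_trans (dyI_sub (lexx l) (dyI_right m l) Ix) Im.
exact: subset_trans In (dyI_sub (lexx _) Iz (dyI_right n (- l))).
Qed.

Lemma tree_top_in m l n : tree R m l n (tree_top m l n).
Proof. by apply/in_tree_top; split. Qed.

Lemma tree_proj_dyI m l n p : tree R m l n p -> dyI R m l (proj1 R p).
Proof. by move=> [l' [m' [N [_ Im _ [Ip _]]]]]; exact: Im. Qed.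

Lemma proj_tree m l n : proj1 R @` tree R m l n = dyI R m l.
Proof.
apply/seteqP; split=> [_ [p /tree_proj_dyI Ip <-]//|x Ix].
exists ((x, 2%:R ^ l), 2%:R ^ (- l) * (n + 1)%:~R) => //.
exists l, m, n; split=> //; split=> //; split; last exact: dyI_right.
by rewrite ltr_pow2 ltrBlDr ltzD1.
Qed.

Lemma tree_meet m l n m1 l1 n1 m2 l2 n2 :
  tree R m l n (tree_top m1 l1 n1) -> tree R m l n (tree_top m2 l2 n2) ->
  dyI R m1 l1 `&` dyI R m2 l2 !=set0 ->
  tree R m1 l1 n1 `&` tree R m2 l2 n2 !=set0.
Proof.
wlog l12 : m1 l1 n1 m2 l2 n2 / l1 <= l2.
  move=> wlog T1 T2 meet; case: (lerP l1 l2) => [|/ltW] l12; first exact: wlog.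
  by rewrite setIC; apply: wlog; rewrite // setIC.
move=> /in_tree_top[_ _ In1] /in_tree_top[_ _ In2] [x [Ix1 Ix2]].
exists (tree_top m1 l1 n1); split; first exact: tree_top_in.
apply/in_tree_top; split=> //; first exact: dyI_sub Ix1 Ix2.
have Iz := dyI_right n (- l).
by apply: dyI_sub (In2 _ Iz) (In1 _ Iz); rewrite lerN2.
Qed.

Lemma tree_sub_strip m l n a b : l <= b -> dyI R m l `<=` dyI R a b ->
  tree R m l n `<=` strip R a b.
Proof.
move=> lb Iml p [l' [m' [N [l'l Im _ [Ip [[hp ph] _]]]]]].
split; first exact/Iml/Im.
split; first exact: lt_trans (pow2_gt0 _) hp.
by apply: (le_trans ph); rewrite ler_pow2; lia.
Qed.

Lemma tree_setI_strip_lt m l n a b N : b < l -> dyI R a b `<=` dyI R m l ->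
  dyI R n (- l) `<=` dyI R N (- b) ->
  tree R m l n `&` strip R a b = tree R a b N.
Proof.
move=> bl Iab In; have Iz := dyI_right n (- l).
apply/seteqP; split=> [p [[l' [m' [N' [l'l Im' In' Hp]]]] [Ip [_ pb]]]|p Tp].
  have [Ip' [[hp _] _]] := Hp.
  have l'b : l' <= b by move: (lt_le_trans hp pb); rewrite ltr_pow2; lia.
  exists l', m', N'; split=> //; first exact: dyI_sub l'b Ip' Ip.
  by apply: dyI_sub (In _ Iz) (In' _ Iz); rewrite lerN2.
have [l' [m' [N' [l'b Im' In' Hp]]]] := Tp.
split; last exact: tree_sub_strip Tp.
exists l', m', N'; split=> //; first lia.
  exact: subset_trans Im' Iab.
exact: subset_trans In In'.
Qed.

Lemma tree_setI_strip m l n a b :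
  tree R m l n `&` strip R a b = set0 \/ trees R (tree R m l n `&` strip R a b).
Proof.
have [[x [Ix Ix']]|disj] :=
  pselect (dyI R m l `&` dyI R a b !=set0); last first.
  left; apply/seteqP; split=> // p [/tree_proj_dyI Ip [Ip' _]].
  by apply: disj; exists (proj1 R p).
right; case: (lerP l b) => lb.
  exists (m, l, n) => //; apply/esym/setIidl.
  exact/tree_sub_strip/(dyI_sub lb Ix Ix').
have [N IN] := dyI_exists (2%:R ^ (- l) * (n + 1)%:~R) (- b).
exists (a, b, N) => //; apply/esym/tree_setI_strip_lt => //.
  exact: dyI_sub (ltW lb) Ix' Ix.
by apply: dyI_sub (dyI_right n (- l)) IN; rewrite lerN2 ltW.
Qed.

End dyadic.

Section dyadic_outer_measures.
Variable R : realType.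
Local Open Scope ereal_scope.

Lemma muE : @mu R = cover_inf (fun j => strip R j.1 j.2) (fun j => 2%:R ^ j.2).
Proof. by []. Qed.

Lemma nuE :
  @nu R = cover_inf (fun j => tree R j.1.1 j.1.2 j.2) (fun j => 2%:R ^ j.1.2).
Proof. by []. Qed.

Lemma strip_system : top_point_system (fun j => strip R j.1 j.2)
  (fun j => 2%:R ^ j.2) lebesgue_measure (fun j => dyI R j.1 j.2)
  (fun j => strip_top R j.1 j.2).
Proof.
split=> [k|k|k|j k|j k k' _ _].
- exact: strip_top_in.
- exact: dyI_measurable.
- exact: lebesgue_measure_dyI.
- exact: in_strip_top.
- exact: strip_meet.
Qed.

Lemma tree_system : top_point_system (fun j => tree R j.1.1 j.1.2 j.2)
  (fun j => 2%:R ^ j.1.2) lebesgue_measure (fun j => dyI R j.1.1 j.1.2)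
  (fun j => tree_top R j.1.1 j.1.2 j.2).
Proof.
split=> [k|k|k|j k|j k k'].
- exact: tree_top_in.
- exact: dyI_measurable.
- exact: lebesgue_measure_dyI.
- by move=> /in_tree_top[].
- exact: tree_meet.
Qed.

Lemma mu_strip m l : mu (strip R m l) = (2%:R ^ l)%:E.
Proof. by rewrite muE (cover_inf_generator strip_system (m, l)). Qed.

Lemma nu_tree m l n : nu (tree R m l n) = (2%:R ^ l)%:E.
Proof. by rewrite nuE (cover_inf_generator tree_system (m, l, n)). Qed.

Lemma len_proj_strip m l : len_proj (strip R m l) = (2%:R ^ l)%:E.
Proof. by rewrite /len_proj proj_strip lebesgue_measure_dyI. Qed.

Lemma len_proj_tree m l n : len_proj (tree R m l n) = (2%:R ^ l)%:E.
Proof. by rewrite /len_proj proj_tree lebesgue_measure_dyI. Qed.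

Lemma mu_bigcup (U : choiceType) (I : set U) (g : U -> set (pt R)) :
  (forall i, I i -> g i = set0 \/ strips R (g i)) -> trivIset I g ->
  mu (\bigcup_(i in I) g i) = \esum_(i in I) mu (g i).
Proof. by rewrite muE; exact: (cover_inf_bigcup strip_system). Qed.

Lemma nu_bigcup (U : choiceType) (I : set U) (g : U -> set (pt R)) :
  (forall i, I i -> g i = set0 \/ trees R (g i)) -> trivIset I g ->
  nu (\bigcup_(i in I) g i) = \esum_(i in I) nu (g i).
Proof. by rewrite nuE; exact: (cover_inf_bigcup tree_system). Qed.

End dyadic_outer_measures.

Lemma pairwise_disjoint_trivIset (R : realType) (C : set (set (pt R))) :
  pairwise_disjoint C -> trivIset C (fun A => A).
Proof.
move=> dC A B CA CB AB0; apply: contrapT => nAB.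
by move: AB0; rewrite dC //; case.
Qed.

Theorem lemma4p4 (R : realType) :
  (forall D1 : set (set (pt R)),
     D1 `<=` strips R -> pairwise_disjoint D1 ->
     mu (\bigcup_(D in D1) D) = \esum_(D in D1) mu D /\
     \esum_(D in D1) mu D = \esum_(D in D1) len_proj D) /\
  (forall T1 : set (set (pt R)),
     T1 `<=` trees R -> pairwise_disjoint T1 ->
     nu (\bigcup_(T in T1) T) = \esum_(T in T1) nu T /\
     \esum_(T in T1) nu T = \esum_(T in T1) len_proj T) /\
  (forall (D1 : set (set (pt R))) (T : set (pt R)),
     D1 `<=` strips R -> pairwise_disjoint D1 -> trees R T ->
     nu (T `&` \bigcup_(D in D1) D) = \esum_(D in D1) nu (T `&` D)).
Proof.
split; [|split].
- move=> D1 D1S /pairwise_disjoint_trivIset tD1; split.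
    by apply: mu_bigcup => // D /D1S; right.
  by apply: eq_esum => _ /D1S[[m l] _ <-]; rewrite mu_strip len_proj_strip.
- move=> T1 T1T /pairwise_disjoint_trivIset tT1; split.
    by apply: nu_bigcup => // T /T1T; right.
  by apply: eq_esum => _ /T1T[[[m l] n] _ <-]; rewrite nu_tree len_proj_tree.
- move=> D1 _ D1S /pairwise_disjoint_trivIset tD1 [[[m l] n] _ <-].
  rewrite setI_bigcupr; apply: nu_bigcup; last exact: trivIset_setIl.
  by move=> _ /D1S[[a b] _ <-]; exact: tree_setI_strip.
Qed.
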